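(* Let $A=[a_{ij}]\in M_{m,n}(\mathbb{R})$ have rank $r>1$ and be diagonally eliminable up to $r$, and let $0\leq k<r$. Then the Gauss-Jordan operation matrix $\mathcal{G}_{2k+1}=[g^{(2k+1)}_{ij}]_{m\times m}$ satisfies $g^{(2k+1)}_{ij}=0$ for $i\neq j$, $g^{(2k+1)}_{ii}=1$ for $i\neq k+1$, and $g^{(2k+1)}_{k+1,k+1}=\dfrac{m_k}{m_{k+1}}$; and $\mathcal{G}_{2k+2}=[g^{(2k+2)}_{ij}]_{m\times m}$ satisfies $$g^{(2k+2)}_{ij}=\begin{cases}0 & \text{if } j\notin\{i,k+1\},\\ 1 & \text{if } i=j,\\ (-1)^{k+i+1}\dfrac{m^{1\dots k}_{1\dots i-1,\,i+1\dots k+1}}{m_k} & \text{if } 1\leq i\leq k,\ j=k+1,\\[2mm] -\dfrac{m^{1\dots k\,i}_{1\dots k\,k+1}}{m_k} & \text{if } k+1<i\leq m,\ j=k+1.\end{cases}$$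
   Context: Gauss-Jordan procedure: for $A\in M_{m,n}(\mathbb{R})$ set $A^{(0)}=A$. For $k\geq 0$, if $A^{(2k)}=[a^{(2k)}_{ij}]$ is defined and $a^{(2k)}_{k+1,k+1}\neq 0$, let $\mathcal{G}_{2k+1}$ be the $m\times m$ diagonal matrix with all diagonal entries $1$ except the $(k+1,k+1)$ entry, which is $1/a^{(2k)}_{k+1,k+1}$, and set $A^{(2k+1)}=\mathcal{G}_{2k+1}A^{(2k)}=[a^{(2k+1)}_{ij}]$; then let $\mathcal{G}_{2k+2}=[g_{ij}]_{m\times m}$ with $g_{ii}=1$, $g_{i,k+1}=-a^{(2k+1)}_{i,k+1}$ for $i\neq k+1$, and all other entries $0$, and set $A^{(2k+2)}=\mathcal{G}_{2k+2}A^{(2k+1)}$. The $\mathcal{G}_q$ are the Gauss-Jordan operation matrices. A matrix $A$ of rank $r\geq 1$ is diagonally eliminable up to $r$ if for each $k=1,\dots,r$ the matrix $A^{(2k-2)}$ is defined and $a^{(2k-2)}_{kk}\neq 0$. Minors: $m^{i_1\dots i_p}_{j_1\dots j_p}$ (increasing indices) is the determinant of the submatrix of $A$ with rows $i_1,\dots,i_p$ and columns $j_1,\dots,j_p$; $m^{1\dots k}_{1\dots i-1,\,i+1\dots k+1}$ uses rows $1,\dots,k$ and columns $1,\dots,k+1$ with $i$ removed. $m_k=m^{1\dots k}_{1\dots k}$ and $m_0=1$. *)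

From HB Require Import structures.
From mathcomp Require Import all_boot all_order all_algebra.
Set Implicit Arguments. Unset Strict Implicit. Unset Printing Implicit Defensive.
Import Order.TTheory GRing.Theory Num.Theory.
Local Open Scope ring_scope.

Section GaussJordan.
Variable R : realFieldType.

(* entry of a matrix at 0-based natural indices (0 outside the range) *)
Definition mxentry m n (A : 'M[R]_(m, n)) (i j : nat) : R :=
  match @insub _ (fun x => x < m)%N 'I_m i, @insub _ (fun x => x < n)%N 'I_n j with
  | Some i', Some j' => A i' j'
  | _, _ => 0
  end.

(* Minor with 1-based row indices rs and column indices cs (same length). *)
Definition minor m n (A : 'M[R]_(m, n)) (rs cs : seq nat) : R :=
  \det (\matrix_(i < size rs, j < size rs)
          mxentry A (nth 0%N rs i).-1 (nth 0%N cs j).-1).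

(* m_k = leading principal minor of order k (m_0 = 1) *)
Definition lead_minor m n (A : 'M[R]_(m, n)) (k : nat) : R :=
  minor A (iota 1 k) (iota 1 k).

(* Operation matrices of step k (0-based k; pivot position k+1 in 1-based
   terms).  G_{2k+1} built from B = A^(2k), G_{2k+2} built from B = A^(2k+1). *)
Definition Gop_odd m n (k : nat) (B : 'M[R]_(m, n)) : 'M[R]_m :=
  \matrix_(i, j) if i == j then (if (i == k :> nat) then (mxentry B k k)^-1 else 1)
                 else 0.

Definition Gop_even m n (k : nat) (B : 'M[R]_(m, n)) : 'M[R]_m :=
  \matrix_(i, j) if i == j then 1
                 else if (j == k :> nat) then - mxentry B i k else 0.

(* GJ_even A k = A^(2k) *)
Fixpoint GJ_even m n (A : 'M[R]_(m, n)) (k : nat) : 'M[R]_(m, n) :=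
  match k with
  | 0 => A
  | k'.+1 =>
      let B := Gop_odd k' (GJ_even A k') *m GJ_even A k' in
      Gop_even k' B *m B
  end.

Definition GJ_odd m n (A : 'M[R]_(m, n)) (k : nat) : 'M[R]_(m, n) :=
  Gop_odd k (GJ_even A k) *m GJ_even A k.

Definition GJ_G_odd m n (A : 'M[R]_(m, n)) (k : nat) : 'M[R]_m :=
  Gop_odd k (GJ_even A k).
Definition GJ_G_even m n (A : 'M[R]_(m, n)) (k : nat) : 'M[R]_m :=
  Gop_even k (GJ_odd A k).

(* diagonally eliminable up to r: for each k = 1..r, a^(2k-2)_{kk} <> 0
   (1-based), i.e. for each k < r, (A^(2k))_{k,k} <> 0 at 0-based index k. *)
Definition diag_elim_upto m n (A : 'M[R]_(m, n)) (r : nat) : Prop :=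
  forall k, (k < r)%N -> (k < m)%N /\ (k < n)%N /\ mxentry (GJ_even A k) k k != 0.

End GaussJordan.

(* Let E = G_{2k} ... G_1, so that A^(2k) = E A.  By induction on k, the first k columns
   of A^(2k) are those of the identity and so are the last m - k columns of E.  Hence, for
   rows containing 1, ..., k, a submatrix of E A is the product of the principal submatrix
   of E on those rows with the corresponding submatrix of A.  On rows and columns 1..k this
   gives det(E_{1..k}) m_k = 1; bordering by row i and column k+1, or deleting column i
   from 1..k+1, then turns the minors of the statement into m_k a^(2k)_{i,k+1}, up to the
   sign of a Laplace expansion.  The entries of G_{2k+1} and G_{2k+2} are, by definition,
   built from 1/a^(2k)_{k+1,k+1} and -a^(2k)_{i,k+1}. *)

From HB Require Import structures.
From mathcomp Require Import all_boot all_order all_algebra.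
From mathcomp Require Import zify.
Import Order.TTheory GRing.Theory Num.Theory.
Local Open Scope ring_scope.

Set Implicit Arguments. Unset Strict Implicit.

Lemma mxsub_mulmx (R : pzSemiRingType) m n p q (E : 'M[R]_m) (A : 'M[R]_(m, n))
    (r : 'I_p -> 'I_m) (c : 'I_q -> 'I_n) :
  injective r -> (forall a l, l \notin codom r -> E (r a) l = 0) ->
  mxsub r c (E *m A) = mxsub r r E *m mxsub r c A.
Proof.
move=> r_inj Er0; apply/matrixP => a b; rewrite !mxE.
rewrite (bigID (mem (codom r))) /= [X in _ + X]big1 ?addr0; last first.
  by move=> l /Er0 ->; rewrite mul0r.
rewrite (eq_bigl (mem (r @: setT))) => [|l]; last first.
  by apply/codomP/imsetP => [[x ->]|[x _ ->]]; exists x.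
rewrite big_imset /=; last by move=> x y _ _ /r_inj.
by apply: eq_big => [x|x _]; rewrite ?inE ?mxE.
Qed.

Lemma det_last_row (R : comPzRingType) p (M : 'M[R]_p.+1) :
  (forall b : 'I_p, M ord_max (widen_ord (leqnSn p) b) = 0) ->
  \det M = M ord_max ord_max
           * \det (mxsub (widen_ord (leqnSn p)) (widen_ord (leqnSn p)) M).
Proof.
move=> M0; rewrite (expand_det_row _ ord_max) big_ord_recr /= big1 ?add0r; last first.
  by move=> b _; rewrite M0 mul0r.
rewrite /cofactor addnn -signr_odd odd_double mul1r; congr (_ * \det _).
apply/matrixP => a b; rewrite !mxE.
by congr (M _ _); apply: val_inj; rewrite /= /bump leqNgt ltn_ord.
Qed.

Lemma iota1S k : iota 1 k.+1 = rcons (iota 1 k) k.+1.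
Proof. by rewrite -[k.+1]addn1 iotaD cats1 add1n addn1. Qed.

Lemma mulr_sign_pivot (R : pzRingType) i k : (i < k)%N ->
  (-1) ^+ (k + i.+1 + 1) * (-1) ^+ (i + k.-1) = -1 :> R.
Proof.
move=> ik; rewrite -exprD (_ : (k + i.+1 + 1 + (i + k.-1) = (i + k).*2.+1)%N).
  by rewrite exprS -signr_odd odd_double mulr1.
by rewrite -addnn; lia.
Qed.

Section GaussJordan.
Variable R : realFieldType.

Definition unit_col m n (B : 'M[R]_(m, n)) (j : 'I_n) : Prop :=
  forall i : 'I_m, B i j = (i == j :> nat)%:R.

Lemma mxentry_ord m n (A : 'M[R]_(m, n)) (i : 'I_m) (j : 'I_n) : mxentry A i j = A i j.
Proof. by rewrite /mxentry !valK. Qed.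

Lemma unit_col_mulmx m n (X : 'M[R]_(m, n)) (Y : 'M[R]_n) (j : 'I_n) :
  unit_col X j -> unit_col Y j -> unit_col (X *m Y) j.
Proof.
move=> Xj Yj i; rewrite mxE (bigD1 j) //= Yj eqxx mulr1 Xj big1 ?addr0 // => l /negbTE lj.
by rewrite Yj val_eqE lj mulr0.
Qed.

Lemma unit_col_Gop_odd m n k (B : 'M[R]_(m, n)) (j : 'I_m) :
  j != k :> nat -> unit_col (Gop_odd k B) j.
Proof.
move=> /negbTE jk i; rewrite mxE.
by case: eqVneq => [->|/negbTE ij]; rewrite ?jk ?eqxx // val_eqE ij.
Qed.

Lemma unit_col_Gop_even m n k (B : 'M[R]_(m, n)) (j : 'I_m) :
  j != k :> nat -> unit_col (Gop_even k B) j.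
Proof.
move=> /negbTE jk i; rewrite mxE.
by case: eqVneq => [->|/negbTE ij]; rewrite ?jk ?eqxx // val_eqE ij.
Qed.

Lemma mul_Gop_odd m n (k : 'I_m) (B : 'M[R]_(m, n)) i j :
  (Gop_odd k B *m B) i j = (if i == k then (mxentry B k k)^-1 else 1) * B i j.
Proof.
rewrite mxE (bigD1 i) //= big1 ?addr0 => [|l /negbTE li]; last by rewrite mxE eq_sym li mul0r.
by rewrite mxE eqxx val_eqE.
Qed.

Lemma mul_Gop_even m n (k : 'I_m) (C : 'M[R]_(m, n)) i j :
  (Gop_even k C *m C) i j = if i == k then C i j else C i j - mxentry C i k * C k j.
Proof.
rewrite mxE (bigD1 i) //= mxE eqxx mul1r; case: eqVneq => [->|ik].
  by rewrite big1 ?addr0 // => l /negbTE lk; rewrite mxE eq_sym lk val_eqE lk mul0r.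
rewrite (bigD1 k) 1?eq_sym //= big1 ?addr0 => [|l /andP[/negbTE li /negbTE lk]]; last first.
  by rewrite mxE eq_sym li val_eqE lk mul0r.
by rewrite mxE (negbTE ik) eqxx mulNr.
Qed.

Lemma GJ_G_even_pivot_col m n (A : 'M[R]_(m, n)) k (i j : 'I_m) :
  i != j -> j = k :> nat -> GJ_G_even A k i j = - mxentry (GJ_even A k) i k.
Proof.
move=> ij <-; rewrite mxE (negbTE ij) eqxx /GJ_odd /mxentry valK.
by case: insubP => [l _ _|_]; rewrite ?mul_Gop_odd ?(negbTE ij) ?mul1r.
Qed.

Section GaussJordanStep.
Variables (m n : nat) (k : 'I_m) (kn : 'I_n) (B : 'M[R]_(m, n)).
Hypotheses (kn_k : kn = k :> nat) (pivot_neq0 : B k kn != 0).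
Let C := Gop_odd k B *m B.

Lemma unit_col_GJ_step_pivot : unit_col (Gop_even k C *m C) kn.
Proof.
have Ckk : C k kn = 1.
  by rewrite mul_Gop_odd eqxx -[X in mxentry _ _ X]kn_k mxentry_ord mulVf.
move=> i; rewrite mul_Gop_even kn_k val_eqE; case: eqP => [->|_] //.
by rewrite Ckk -kn_k mxentry_ord mulr1 subrr.
Qed.

Lemma unit_col_GJ_step (j : 'I_n) :
  j != k :> nat -> unit_col B j -> unit_col (Gop_even k C *m C) j.
Proof.
move=> jk Bj i; have kj : (k == j :> nat) = false by rewrite eq_sym (negbTE jk).
rewrite mul_Gop_even !mul_Gop_odd !Bj kj !mulr0 subr0.
by case: eqVneq => [->|_]; rewrite ?kj ?mulr0 ?mul1r.
Qed.

End GaussJordanStep.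

Fixpoint GJ_ops m n (A : 'M[R]_(m, n)) (k : nat) : 'M[R]_m :=
  if k is k'.+1 then GJ_G_even A k' *m GJ_G_odd A k' *m GJ_ops A k' else 1%:M.

Lemma GJ_evenE m n (A : 'M[R]_(m, n)) k : GJ_even A k = GJ_ops A k *m A.
Proof. by elim: k => [|k IH]; rewrite ?mul1mx //= -!mulmxA -IH. Qed.

Lemma unit_col_GJ_ops m n (A : 'M[R]_(m, n)) k (j : 'I_m) :
  (k <= j)%N -> unit_col (GJ_ops A k) j.
Proof.
elim: k => [_ i | k IH kj]; first by rewrite mxE.
have jk : j != k :> nat by rewrite neq_ltn kj orbT.
apply: unit_col_mulmx; last exact/IH/ltnW.
by apply: unit_col_mulmx; [apply: unit_col_Gop_even | apply: unit_col_Gop_odd].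
Qed.

Lemma unit_col_GJ_even m n (A : 'M[R]_(m, n)) k (j : 'I_n) :
  diag_elim_upto A k -> (j < k)%N -> unit_col (GJ_even A k) j.
Proof.
elim: k => [//|k IH] elim_k; have [km [kn pivot]] := elim_k k (ltnSn k).
have pivot0 : GJ_even A k (Ordinal km) (Ordinal kn) != 0.
  by rewrite -(mxentry_ord _ (Ordinal km) (Ordinal kn)).
rewrite ltnS leq_eqVlt => /orP[/eqP jk | jk].
  have -> : j = Ordinal kn by apply: val_inj.
  exact: (@unit_col_GJ_step_pivot _ _ (Ordinal km) (Ordinal kn) _ erefl pivot0).
apply: (@unit_col_GJ_step _ _ (Ordinal km)); first by rewrite neq_ltn jk.
by apply: IH => // l lk; apply: elim_k; apply: ltnW.
Qed.

Lemma minor_mxsub m n (A : 'M[R]_(m, n)) p (rs cs : seq nat)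
    (r : 'I_p -> 'I_m) (c : 'I_p -> 'I_n) :
  size rs = p -> (forall a : 'I_p, (nth 0 rs a).-1 = r a) ->
  (forall b : 'I_p, (nth 0 cs b).-1 = c b) ->
  minor A rs cs = \det (mxsub r c A).
Proof.
move=> size_rs rsE csE; rewrite /minor; move: r c rsE csE; rewrite -size_rs => r c rsE csE.
by congr (\det _); apply/matrixP => a b; rewrite !mxE rsE csE mxentry_ord.
Qed.

Lemma lead_minor_mxsub m n (A : 'M[R]_(m, n)) k (k_le_m : (k <= m)%N)
    (k_le_n : (k <= n)%N) :
  lead_minor A k = \det (mxsub (widen_ord k_le_m) (widen_ord k_le_n) A).
Proof. by apply: minor_mxsub; rewrite ?size_iota // => a; rewrite nth_iota. Qed.

(* 0-based indices of the rows (or columns) 1, ..., k, x+1 of the paper. *)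
Definition border k p (x : 'I_p) (a : 'I_k.+1) : 'I_p :=
  insubd x (if (a < k)%N then a : nat else x).
Arguments border k {p} x a.

Lemma border_val k p (x : 'I_p) a :
  (k <= p)%N -> border k x a = (if (a < k)%N then a : nat else x) :> nat.
Proof.
move=> k_le_p; rewrite val_insubd; case: (ltnP a k) => [ak|_]; last by rewrite if_same.
by rewrite (leq_trans ak k_le_p).
Qed.

Lemma border_widen k p (x : 'I_p) (k_le_p : (k <= p)%N) (a : 'I_k) :
  border k x (widen_ord (leqnSn k) a) = widen_ord k_le_p a.
Proof. by apply: ord_inj; rewrite border_val //= ltn_ord. Qed.

Lemma border_max k p (x : 'I_p) : (k <= p)%N -> border k x ord_max = x.
Proof. by move=> k_le_p; apply: ord_inj; rewrite border_val // ltnn. Qed.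

Lemma border_inj k p (x : 'I_p) : (k <= x)%N -> injective (border k x).
Proof.
move=> k_le_x a b /(congr1 (@nat_of_ord p)).
have k_le_p : (k <= p)%N := leq_trans k_le_x (ltnW (ltn_ord x)).
rewrite !border_val // => e; apply: ord_inj.
by move: e (ltn_ord a) (ltn_ord b); case: (ltnP a k); case: (ltnP b k); lia.
Qed.

Lemma minor_border_mxsub m n (A : 'M[R]_(m, n)) k (i : 'I_m) (j : 'I_n) :
  (k <= i)%N -> (k <= j)%N ->
  minor A (rcons (iota 1 k) i.+1) (rcons (iota 1 k) j.+1)
    = \det (mxsub (border k i) (border k j) A).
Proof.
have nth_border p (x : 'I_p) (a : 'I_k.+1) : (k <= x)%N ->
    (nth 0 (rcons (iota 1 k) x.+1) a).-1 = border k x a.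
  move=> kx; rewrite border_val ?(leq_trans kx (ltnW (ltn_ord x))) // nth_rcons size_iota.
  case: ltnP => [ak|ka]; first by rewrite nth_iota.
  by rewrite (_ : a == k :> nat) // eqn_leq ka andbT -ltnS ltn_ord.
by move=> ki kj; apply: minor_mxsub => [|a|b]; rewrite ?size_rcons ?size_iota ?nth_border.
Qed.

Lemma minor_skip_mxsub m n (A : 'M[R]_(m, n)) k (k_le_m : (k <= m)%N) i (j : 'I_n) :
  (i < k)%N -> j = k :> nat ->
  minor A (iota 1 k) (iota 1 i ++ iota i.+2 (k - i))
    = \det (mxsub (widen_ord k_le_m) (fun b => insubd j (bump i b)) A).
Proof.
move=> ik jk; apply: minor_mxsub => [|a|b]; rewrite ?size_iota ?nth_iota //.
have bump_lt : (bump i b < n)%N.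
  by rewrite /bump; move: (ltn_ord b) (ltn_ord j); case: leqP; lia.
rewrite val_insubd bump_lt nth_cat size_iota /bump; have bk := ltn_ord b.
by case: (ltnP b i) => bi; rewrite nth_iota //=; lia.
Qed.

Lemma det_border_leading_unit_cols m n k (B : 'M[R]_(m, n)) (i : 'I_m) (j : 'I_n) :
  (k <= i)%N -> (k <= n)%N -> (forall l : 'I_n, (l < k)%N -> unit_col B l) ->
  \det (mxsub (border k i) (border k j) B) = B i j.
Proof.
move=> k_le_i k_le_n B_cols; have k_le_m := leq_trans k_le_i (ltnW (ltn_ord i)).
rewrite det_last_row => [|b]; last first.
  rewrite mxE border_max // (border_widen _ k_le_n) B_cols //=.
  by rewrite gtn_eqF // (leq_trans (ltn_ord b) k_le_i).
rewrite mxE !border_max // -[RHS]mulr1 -(det1 R k); congr (_ * \det _).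
apply/matrixP => a b; rewrite 2!mxE (border_widen _ k_le_m) (border_widen _ k_le_n).
by rewrite B_cols ?mxE; last exact: (ltn_ord b).
Qed.

Lemma det_border_trailing_unit_cols m k (E : 'M[R]_m) (i : 'I_m) (k_le_m : (k <= m)%N) :
  (k <= i)%N -> (forall l : 'I_m, (k <= l)%N -> unit_col E l) ->
  \det (mxsub (border k i) (border k i) E)
    = \det (mxsub (widen_ord k_le_m) (widen_ord k_le_m) E).
Proof.
move=> k_le_i E_cols; rewrite -det_tr det_last_row => [|b]; last first.
  rewrite !mxE border_max // (border_widen _ k_le_m) E_cols //=.
  by rewrite ltn_eqF // (leq_trans (ltn_ord b) k_le_i).
rewrite !mxE border_max // E_cols // eqxx mul1r -det_tr; congr (\det _).
by apply/matrixP => a b; rewrite !mxE !(border_widen _ k_le_m).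
Qed.

Lemma det_skip_leading_unit_cols m n k (B : 'M[R]_(m, n)) (k_le_m : (k <= m)%N)
    (i : 'I_m) (j : 'I_n) :
  (i < k)%N -> j = k :> nat -> (forall l : 'I_n, (l < k)%N -> unit_col B l) ->
  \det (mxsub (widen_ord k_le_m) (fun b => insubd j (bump i b)) B)
    = (-1) ^+ (i + k.-1) * B i j.
Proof.
move=> ik jk B_cols; set c := fun b => _.
have c_val b : c b = bump i b :> nat.
  by rewrite val_insubd ifT // /bump; move: (ltn_ord b) (ltn_ord j); case: leqP; lia.
(* Expand along row i: its only nonzero entry B i j sits in the last column. *)
have kl_lt : (k.-1 < k)%N by lia.
pose i' := Ordinal ik; pose kl := Ordinal kl_lt.
rewrite (expand_det_row _ i') (bigD1 kl) //= big1 ?addr0 => [|b b_kl]; last first.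
  rewrite mxE B_cols ?c_val ?(negbTE (neq_bump _ _)) ?mul0r // /bump.
  by move: b_kl (ltn_ord b); rewrite -val_eqE /=; case: leqP; lia.
have c_kl : c kl = j by apply: ord_inj; rewrite c_val /bump /=; lia.
have i'_i : widen_ord k_le_m i' = i by apply: ord_inj.
rewrite mxE c_kl i'_i mulrC; congr (_ * _).
rewrite /cofactor -[RHS]mulr1; congr (_ * _); rewrite -(det1 R k.-1).
congr (\det _); apply/matrixP => a b; rewrite 3!mxE B_cols ?mxE; last first.
  by rewrite c_val /= /bump; move: (ltn_ord b); case: leqP; lia.
by rewrite c_val /= {3}/bump leqNgt ltn_ord add0n (inj_eq (can_inj (bumpK i))).
Qed.

Section Minors.
Variables (m n k : nat) (E : 'M[R]_m) (A : 'M[R]_(m, n)).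
Hypotheses (k_le_m : (k <= m)%N) (k_le_n : (k <= n)%N).
Hypotheses (E_cols : forall j : 'I_m, (k <= j)%N -> unit_col E j)
           (EA_cols : forall j : 'I_n, (j < k)%N -> unit_col (E *m A) j).

Local Notation wm := (widen_ord k_le_m).
Local Notation wn := (widen_ord k_le_n).

Lemma mxsub_mulmx_lead p q (r : 'I_p -> 'I_m) (c : 'I_q -> 'I_n) :
  injective r -> (forall l : 'I_m, (l < k)%N -> l \in codom r) ->
  mxsub r c (E *m A) = mxsub r r E *m mxsub r c A.
Proof.
move=> r_inj r_lead; apply: mxsub_mulmx => // a l l_r.
have k_le_l : (k <= l)%N by rewrite leqNgt; apply: contra l_r; apply: r_lead.
rewrite E_cols // val_eqE; case: eqP l_r => // <-; by rewrite codom_f.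
Qed.

Lemma mxsub_mulmx_lead_rows q (c : 'I_q -> 'I_n) :
  mxsub wm c (E *m A) = mxsub wm wm E *m mxsub wm c A.
Proof.
apply: mxsub_mulmx_lead => [a b /(congr1 val) ab | l lk]; first exact: val_inj.
by apply/codomP; exists (Ordinal lk); apply: val_inj.
Qed.

Lemma det_lead_block_inv : \det (mxsub wm wm E) * \det (mxsub wm wn A) = 1.
Proof.
rewrite -det_mulmx -mxsub_mulmx_lead_rows -(det1 R k); congr (\det _).
apply/matrixP => a b.
by rewrite mxE EA_cols ?mxE; last exact: (ltn_ord b).
Qed.

Lemma det_border_mxsub (i : 'I_m) (j : 'I_n) : (k <= i)%N ->
  \det (mxsub (border k i) (border k j) A) = \det (mxsub wm wn A) * (E *m A) i j.
Proof.
move=> k_le_i; have r_lead (l : 'I_m) : (l < k)%N -> l \in codom (border k i).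
  move=> lk; apply/codomP; exists (widen_ord (leqnSn k) (Ordinal lk)).
  by rewrite (border_widen _ k_le_m); apply: val_inj.
move: (congr1 determinant (mxsub_mulmx_lead (border k j) (border_inj k_le_i) r_lead)).
rewrite det_mulmx (det_border_trailing_unit_cols k_le_m) //.
rewrite (det_border_leading_unit_cols (B := E *m A)) // => ->.
by rewrite mulrA (mulrC (\det _)) det_lead_block_inv mul1r.
Qed.

Lemma det_skip_mxsub (i : 'I_m) (j : 'I_n) : (i < k)%N -> j = k :> nat ->
  \det (mxsub wm (fun b => insubd j (bump i b)) A)
    = (-1) ^+ (i + k.-1) * \det (mxsub wm wn A) * (E *m A) i j.
Proof.
move=> ik jk.
move: (congr1 determinant (mxsub_mulmx_lead_rows (fun b => insubd j (bump i b)))).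
rewrite det_mulmx (det_skip_leading_unit_cols (B := E *m A)) // => EA_minor.
by rewrite mulrAC EA_minor mulrAC det_lead_block_inv mul1r.
Qed.

End Minors.

Section PivotMinors.
Variables (m n : nat) (A : 'M[R]_(m, n)) (k : nat).
Hypothesis elim_k1 : diag_elim_upto A k.+1.

Let k_lt_m : (k < m)%N := (elim_k1 (ltnSn k)).1.
Let k_lt_n : (k < n)%N := (elim_k1 (ltnSn k)).2.1.
Let k_le_m : (k <= m)%N := ltnW k_lt_m.
Let k_le_n : (k <= n)%N := ltnW k_lt_n.
Let kn : 'I_n := Ordinal k_lt_n.

Let ops_cols : forall j : 'I_m, (k <= j)%N -> unit_col (GJ_ops A k) j :=
  @unit_col_GJ_ops m n A k.

Let opsA_cols (j : 'I_n) : (j < k)%N -> unit_col (GJ_ops A k *m A) j.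
Proof. by rewrite -GJ_evenE; apply: unit_col_GJ_even => l lk; apply/elim_k1/ltnW. Qed.

Lemma lead_minor_neq0 : lead_minor A k != 0.
Proof.
apply/eqP => mk0; have := det_lead_block_inv k_le_m k_le_n ops_cols opsA_cols.
by rewrite -(lead_minor_mxsub A) mk0 mulr0 => /eqP; rewrite eq_sym oner_eq0.
Qed.

Lemma minor_border_pivot (i : 'I_m) : (k <= i)%N ->
  minor A (rcons (iota 1 k) i.+1) (iota 1 k.+1)
    = lead_minor A k * mxentry (GJ_even A k) i k.
Proof.
move=> ki; rewrite iota1S (minor_border_mxsub A ki (j := kn)) //.
rewrite (det_border_mxsub k_le_m k_le_n ops_cols opsA_cols) // -(lead_minor_mxsub A).
by rewrite -GJ_evenE (mxentry_ord _ i kn).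
Qed.

Lemma lead_minorS : lead_minor A k.+1 = lead_minor A k * mxentry (GJ_even A k) k k.
Proof.
by rewrite -(minor_border_pivot (i := Ordinal k_lt_m)) // /lead_minor iota1S.
Qed.

Lemma minor_skip_pivot (i : 'I_m) : (i < k)%N ->
  minor A (iota 1 k) (iota 1 i ++ iota i.+2 (k - i))
    = (-1) ^+ (i + k.-1) * lead_minor A k * mxentry (GJ_even A k) i k.
Proof.
move=> ik; rewrite (minor_skip_mxsub A k_le_m (j := kn)) //.
rewrite (det_skip_mxsub k_le_m k_le_n ops_cols opsA_cols) // -(lead_minor_mxsub A).
by rewrite -GJ_evenE (mxentry_ord _ i kn).
Qed.

End PivotMinors.

End GaussJordan.

Theorem theorem2p7 (R : realFieldType) (m n : nat) (A : 'M[R]_(m, n)) (r k : nat) :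
  \rank A = r -> (1 < r)%N -> diag_elim_upto A r -> (k < r)%N ->
  (* G_{2k+1} *)
  ((forall i j : 'I_m, i != j -> GJ_G_odd A k i j = 0) /\
   (forall i : 'I_m, (i.+1 != k.+1)%N -> GJ_G_odd A k i i = 1) /\
   (forall i : 'I_m, (i.+1 = k.+1)%N ->
      GJ_G_odd A k i i = lead_minor A k / lead_minor A k.+1)) /\
  (* G_{2k+2} *)
  ((forall i j : 'I_m, (j.+1 != i.+1)%N -> (j.+1 != k.+1)%N -> GJ_G_even A k i j = 0) /\
   (forall i : 'I_m, GJ_G_even A k i i = 1) /\
   (forall i j : 'I_m, (1 <= i.+1 <= k)%N -> (j.+1 = k.+1)%N ->
      GJ_G_even A k i j =
        (-1) ^+ (k + i.+1 + 1)
        * minor A (iota 1 k) (iota 1 (i.+1 - 1) ++ iota (i.+1 + 1) (k.+1 - i.+1))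
        / lead_minor A k) /\
   (forall i j : 'I_m, (k.+1 < i.+1 <= m)%N -> (j.+1 = k.+1)%N ->
      GJ_G_even A k i j =
        - minor A (rcons (iota 1 k) i.+1) (iota 1 k.+1) / lead_minor A k)).
Proof.
move=> _ _ elim_r k_lt_r.
have elim_k1 : diag_elim_upto A k.+1 := fun j jk => elim_r j (leq_trans jk k_lt_r).
have mk_neq0 := lead_minor_neq0 elim_k1.
split; [split; [|split] | split; [|split; [|split]]].
- by move=> i j ij; rewrite mxE (negbTE ij).
- by move=> i; rewrite eqSS => /negbTE ik; rewrite mxE eqxx ik.
- move=> i [ik]; rewrite mxE eqxx ik eqxx lead_minorS //.
  by rewrite invfM mulrA divff // mul1r.
- move=> i j; rewrite !eqSS => ji /negbTE jk.
  have /negbTE ij : i != j by apply: contraNneq ji => ->.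
  by rewrite mxE ij jk.
- by move=> i; rewrite mxE eqxx.
- move=> i j /andP[_ ik] [jk].
  have ij : i != j by apply: contraTneq ik => ->; rewrite jk ltnn.
  rewrite (GJ_G_even_pivot_col _ ij jk) subn1 [(i.+1 + 1)%N]addn1 subSS minor_skip_pivot //.
  by rewrite !mulrA mulr_sign_pivot // mulN1r !mulNr mulrAC divff // mul1r.
- move=> i j /andP[ki _] [jk].
  have ij : i != j by apply: contraTneq ki => ->; rewrite jk ltnn.
  rewrite (GJ_G_even_pivot_col _ ij jk) minor_border_pivot 1?ltnW //.
  by rewrite mulNr mulrAC divff // mul1r.
Qed.
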